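(* Let $\mathcal X$ be a finite multi-set of real symmetric $2\times2$ matrices with nonnegative eigenvalues satisfying the hypotheses of Lemma 7 (unique largest eigenvalue $\lambda_1$; unique second largest eigenvalue $\lambda_2$ whose eigenvector is not perpendicular to that of $\lambda_1$), and let $S=\mathrm{Sup}_{\mathrm{LE}}(\mathcal X)$. Then $S\in\mathcal U_p(\mathcal X)$ for every $p>0$.
   Context: $\mathrm{Sym}(2)$: real symmetric $2\times2$ matrices; $A\le_{\mathrm L}B$ means $B-A$ positive semidefinite; $\mathcal U(\mathcal X):=\{Y\in\mathrm{Sym}(2):X\le_{\mathrm L}Y\ \forall X\in\mathcal X\}$. $\mathrm{Sup}_{\mathrm{LE}}(\mathcal X):=\lim_{m\to\infty}\frac1m\log\sum_{X\in\mathcal X}\exp(mX)$. For a positive semidefinite $Y=\lambda uu^{\mathsf T}+\mu vv^{\mathsf T}$ (spectral form), $Y^p:=\lambda^puu^{\mathsf T}+\mu^pvv^{\mathsf T}$. For $\mathcal X$ with nonnegative eigenvalues, $\mathcal X^p:=\{X^p:X\in\mathcal X\}$ and the $p$-power upper bound cone is $\mathcal U_p(\mathcal X):=\{Y\in\mathrm{Sym}(2)\text{ positive semidefinite}:Y^p\in\mathcal U(\mathcal X^p)\}$. Eigenvalue conventions: the eigenvalues of $\mathcal X$ form the multi-set of both eigenvalues of every matrix; unique means occurring exactly once. *)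

From HB Require Import structures.
From mathcomp Require Import all_boot all_order all_algebra.
From mathcomp Require Import all_classical all_reals all_analysis.
Set Implicit Arguments. Unset Strict Implicit. Unset Printing Implicit Defensive.
Import Order.TTheory GRing.Theory Num.Theory.
Import numFieldNormedType.Exports.
Local Open Scope classical_set_scope.
Local Open Scope ring_scope.

Section Defs.
Variable R : realType.

Definition sym2 (A : 'M[R]_2) : Prop := A^T = A.

Definition psd (A : 'M[R]_2) : Prop :=
  sym2 A /\ forall v : 'cV[R]_2, 0 <= (v^T *m A *m v) 0 0.

Definition loewner_le (A B : 'M[R]_2) : Prop := psd (B - A).

Definition upper_cone (Xs : seq 'M[R]_2) (Y : 'M[R]_2) : Prop :=
  sym2 Y /\ forall X, X \in Xs -> loewner_le X Y.

Definition is_spec (Y : 'M[R]_2) (d : R * R * 'cV[R]_2 * 'cV[R]_2) : Prop :=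
  let: (l, m, u, v) := d in
  (u^T *m u) 0 0 = 1 /\ (v^T *m v) 0 0 = 1 /\ (u^T *m v) 0 0 = 0 /\
  Y = l *: (u *m u^T) + m *: (v *m v^T).

(* spectral functional calculus f(Y) = f(l) u u^T + f(m) v v^T
   (independent of the chosen spectral form; 0 if Y has none) *)
Definition funcalc (f : R -> R) (Y : 'M[R]_2) : 'M[R]_2 :=
  match pselect (exists d, is_spec Y d) with
  | left h => let: (l, m, u, v) := projT1 (cid h) in
              f l *: (u *m u^T) + f m *: (v *m v^T)
  | right _ => 0
  end.

Definition expm (Y : 'M[R]_2) := funcalc (@expR R) Y.
Definition logm (Y : 'M[R]_2) := funcalc (@ln R) Y.
Definition powm (Y : 'M[R]_2) (p : R) := funcalc (fun t => powR t p) Y.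

Definition upper_cone_p (p : R) (Xs : seq 'M[R]_2) (Y : 'M[R]_2) : Prop :=
  psd Y /\ upper_cone [seq powm X p | X <- Xs] (powm Y p).

Definition supLE_seq (Xs : seq 'M[R]_2) (m : nat) : 'M[R]_2 :=
  m%:R^-1 *: logm (\sum_(X <- Xs) expm (m%:R *: X)).

Definition is_supLE (Xs : seq 'M[R]_2) (S : 'M[R]_2) : Prop :=
  forall i j : 'I_2, (fun m : nat => (supLE_seq Xs m i j : R)) @ \oo --> (S i j : R).

Definition eigmult (Xs : seq 'M[R]_2) (t : R) : nat :=
  (\sum_(X <- Xs) mup t (char_poly X))%N.

Definition is_eig (Xs : seq 'M[R]_2) (t : R) : Prop := (0 < eigmult Xs t)%N.

Definition lemma7_hyp (Xs : seq 'M[R]_2) : Prop :=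
  exists l1 l2 : R,
    eigmult Xs l1 = 1%N /\ (forall t, is_eig Xs t -> t <= l1) /\
    eigmult Xs l2 = 1%N /\ l2 < l1 /\
    (forall t, is_eig Xs t -> t < l1 -> t <= l2) /\
        (forall (X1 X2 : 'M[R]_2) (u v : 'cV[R]_2),
           X1 \in Xs -> X2 \in Xs -> u != 0 -> v != 0 ->
           X1 *m u = l1 *: u -> X2 *m v = l2 *: v ->
           (u^T *m v) 0 0 != 0).

End Defs.

From HB Require Import structures.
From mathcomp Require Import all_boot all_order all_algebra.
From mathcomp Require Import all_classical all_reals all_analysis.
From mathcomp Require Import ring lra.
Import Order.TTheory GRing.Theory Num.Theory.
Local Open Scope ring_scope.
Local Open Scope classical_set_scope.
Import numFieldNormedType.Exports.

(* Let [L] be the largest eigenvalue, carried by a unit eigenvector [u] of some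
   [X1] in [Xs] whose other eigenpair is [(a, v)], and let [M_m = \sum exp (m X)].
   The term of [X1] gives [e^(mL) (u.e)^2 <= <M_m e, e>], and every term is at
   most [e^(mL) |e|^2]; after [1/m log] and [m -> oo] this yields [S <= L] and
   [<S u, u> >= L], so [S = L u u^T + k v v^T] with [k = <S v, v>].  For an
   eigenpair [(al, w)] of any [X] in [Xs] with [w] not parallel to [u], the terms
   [e^(mL) (u.e)^2 + e^(m al) (w.e)^2] bound [M_m] below by a multiple of
   [e^(m al)], whence [al <= k].  Eigenvalues along [u] are at most [L] and those
   along [v] at most [k], so monotonicity of [t |-> t^p] gives [X^p <= S^p]. *)

Set Implicit Arguments. Unset Strict Implicit. Unset Printing Implicit Defensive.

Lemma sum_ord2 (V : nmodType) (F : 'I_2 -> V) : \sum_(i < 2) F i = F 0 + F 1.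
Proof. by rewrite big_ord_recr big_ord1; congr (F _ + F _); apply/val_inj. Qed.

Section Coordinates.
Variable R : comNzRingType.
Local Notation M2 := 'M[R]_2.
Local Notation V2 := 'cV[R]_2.

Lemma ord2P (i : 'I_2) : i = 0 \/ i = 1.
Proof. by case: i => [[|[|n]]] Hi; [left|right|by []]; exact/val_inj. Qed.

Lemma matrix2P (A B : M2) :
  A 0 0 = B 0 0 -> A 0 1 = B 0 1 -> A 1 0 = B 1 0 -> A 1 1 = B 1 1 -> A = B.
Proof.
move=> h00 h01 h10 h11; apply/matrixP => i j.
by case: (ord2P i) => ->; case: (ord2P j) => ->.
Qed.

Definition vdot (u v : V2) : R := (u^T *m v) 0 0.
Definition bform (A : M2) (u v : V2) : R := (u^T *m A *m v) 0 0.
Definition qform (A : M2) (x : V2) : R := bform A x x.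
Definition cross (u v : V2) : R := u 0 0 * v 1 0 - u 1 0 * v 0 0.

Lemma vdotE (u v : V2) : vdot u v = u 0 0 * v 0 0 + u 1 0 * v 1 0.
Proof. by rewrite /vdot mxE sum_ord2 !mxE. Qed.

Lemma vdotC (u v : V2) : vdot u v = vdot v u.
Proof. by rewrite !vdotE mulrC [u 1 0 * _]mulrC. Qed.

Lemma mulmx2E (A : M2) (x : V2) i : (A *m x) i 0 = A i 0 * x 0 0 + A i 1 * x 1 0.
Proof. by rewrite mxE sum_ord2. Qed.

Lemma bformE (A : M2) (u v : V2) :
  bform A u v = u 0 0 * (A 0 0 * v 0 0 + A 0 1 * v 1 0)
              + u 1 0 * (A 1 0 * v 0 0 + A 1 1 * v 1 0).
Proof. by rewrite /bform -mulmxA -/(vdot _ _) vdotE !mulmx2E. Qed.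

Lemma bformC (A : M2) (u v : V2) : A^T = A -> bform A v u = bform A u v.
Proof.
move=> AT; rewrite /bform -[v^T *m A *m u]trmxK [in LHS]mxE.
by rewrite !trmx_mul trmxK AT mulmxA.
Qed.

Lemma bformDr (A : M2) (u v w : V2) : bform A u (v + w) = bform A u v + bform A u w.
Proof. by rewrite /bform mulmxDr mxE. Qed.

Lemma bformDl (A : M2) (u v w : V2) : bform A (u + v) w = bform A u w + bform A v w.
Proof. by rewrite /bform linearD /= !mulmxDl mxE. Qed.

Lemma bformZr (A : M2) (u v : V2) t : bform A u (t *: v) = t * bform A u v.
Proof. by rewrite /bform -scalemxAr mxE. Qed.

Lemma bformZl (A : M2) (u v : V2) t : bform A (t *: u) v = t * bform A u v.
Proof. by rewrite /bform linearZ /= -!scalemxAl mxE. Qed.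

Lemma qformD (A B : M2) x : qform (A + B) x = qform A x + qform B x.
Proof. by rewrite /qform /bform mulmxDr mulmxDl mxE. Qed.

Lemma qformB (A B : M2) x : qform (A - B) x = qform A x - qform B x.
Proof. by rewrite /qform /bform mulmxBr mulmxBl !mxE. Qed.

Lemma qformZ (A : M2) k x : qform (k *: A) x = k * qform A x.
Proof. by rewrite /qform /bform -scalemxAr -scalemxAl mxE. Qed.

Lemma qform_sum (s : seq M2) (F : M2 -> M2) x :
  qform (\sum_(X <- s) F X) x = \sum_(X <- s) qform (F X) x.
Proof.
elim: s => [|X s IH]; last by rewrite !big_cons qformD IH.
by rewrite !big_nil /qform /bform mulmx0 mul0mx mxE.
Qed.

Lemma qform_rank1 (w x : V2) : qform (w *m w^T) x = vdot w x ^+ 2.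
Proof. by rewrite /qform bformE vdotE !mxE !big_ord1 !mxE; ring. Qed.

Lemma mulmx_rank1 (u v : V2) (A : M2) :
  u *m u^T *m A *m (v *m v^T) = bform A u v *: (u *m v^T).
Proof.
have -> : u *m u^T *m A *m (v *m v^T) = u *m (u^T *m A *m v) *m v^T.
  by rewrite !mulmxA.
by rewrite [u^T *m A *m v]mx11_scalar mul_mx_scalar -scalemxAl.
Qed.

Lemma char_poly2E (A : M2) t :
  (char_poly A).[t] = (t - A 0 0) * (t - A 1 1) - A 0 1 * A 1 0.
Proof.
rewrite /char_poly (expand_det_row _ 0) sum_ord2 /cofactor !det_mx11 !mxE /=.
rewrite !hornerE /=.
have -> : lift 0 (0 : 'I_1) = 1 :> 'I_2 by apply/val_inj.
have -> : lift 1 (0 : 'I_1) = 0 :> 'I_2 by apply/val_inj.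
ring.
Qed.

End Coordinates.

Section Frames.
Variable R : realFieldType.
Local Notation V2 := 'cV[R]_2.

Definition orthonormal2 (u v : V2) := [/\ vdot u u = 1, vdot v v = 1 & vdot u v = 0].

Lemma orthonormalC (u v : V2) : orthonormal2 u v -> orthonormal2 v u.
Proof. by case=> hu hv huv; split; rewrite // vdotC. Qed.

Lemma orthonormal_resolution (u v : V2) : orthonormal2 u v ->
  u *m u^T + v *m v^T = 1%:M.
Proof.
case=> hu hv huv.
have one11 (w z : V2) c : vdot w z = c -> w^T *m z = c%:M.
  by move=> <-; rewrite [LHS]mx11_scalar.
rewrite -mul_row_col -tr_row_mx; apply: (@mulmx1C _ (1 + 1)).
rewrite tr_row_mx mul_col_row (scalar_mx_block 1 1) (one11 _ _ _ hu) (one11 _ _ _ hv).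
rewrite (one11 _ _ _ huv) (one11 v u 0) 1?vdotC //.
by congr block_mx; apply/matrixP => i j; rewrite !mxE mul0rn.
Qed.

Lemma orthonormal_coords (u v : V2) : orthonormal2 u v ->
  [/\ u 0 0 ^+ 2 + v 0 0 ^+ 2 = 1, u 1 0 ^+ 2 + v 1 0 ^+ 2 = 1,
      u 0 0 * u 1 0 + v 0 0 * v 1 0 = 0 & cross u v ^+ 2 = 1].
Proof.
move=> /orthonormal_resolution/matrixP E.
have entry i j : u i 0 * u j 0 + v i 0 * v j 0 = (1%:M : 'M[R]_2) i j.
  by rewrite -E !mxE !big_ord1 !mxE.
have e00 := entry 0 0; have e11 := entry 1 1; have e01 := entry 0 1.
rewrite !mxE /= -!expr2 in e00 e11 e01.
split => //; rewrite /cross.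
transitivity ((u 0 0 ^+ 2 + v 0 0 ^+ 2) * (u 1 0 ^+ 2 + v 1 0 ^+ 2)
              - (u 0 0 * u 1 0 + v 0 0 * v 1 0) ^+ 2); first by ring.
by rewrite e00 e11 e01; ring.
Qed.

Lemma orthonormal_parseval (u v x : V2) : orthonormal2 u v ->
  vdot u x ^+ 2 + vdot v x ^+ 2 = vdot x x.
Proof.
by move=> uv; rewrite -!qform_rank1 -qformD orthonormal_resolution // /qform /bform mulmx1.
Qed.

Lemma sq_cross_le (u y e : V2) : vdot u u = 1 -> vdot y y = 1 ->
  cross u y ^+ 2 * vdot e e <= 2 * (vdot u e ^+ 2 + vdot y e ^+ 2).
Proof.
rewrite !vdotE /cross => hu hy.
set p := u 0 0 * e 0 0 + u 1 0 * e 1 0.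
set q := y 0 0 * e 0 0 + y 1 0 * e 1 0.
have f2 := sqr_ge0 (y 1 0 * p + u 1 0 * q).
have f3 := sqr_ge0 (y 0 0 * p + u 0 0 * q).
have f4 := congr1 (fun t => p ^+ 2 * t) hy.
have f5 := congr1 (fun t => q ^+ 2 * t) hu.
simpl in *; rewrite /p /q in f2 f3 f4 f5 *.
lra.
Qed.

Lemma parallel_vdot_sq (u w x : V2) : vdot u u = 1 -> vdot w w = 1 ->
  cross u w = 0 -> vdot w x ^+ 2 = vdot u x ^+ 2.
Proof.
move=> hu hw hD.
have e1 : vdot w x = vdot u w * vdot u x.
  move: hu hD; rewrite !vdotE /cross => hu hD.
  have f1 := congr1 (fun t => t * (u 0 0 * x 1 0 - u 1 0 * x 0 0)) hD.
  have f2 := congr1 (fun t => t * (w 0 0 * x 0 0 + w 1 0 * x 1 0)) hu.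
  simpl in *; lra.
have e2 : vdot u w ^+ 2 = 1.
  move: hu hw hD; rewrite !vdotE /cross => hu hw hD.
  have f1 := congr1 (fun t => t * t) hD.
  have f2 := congr1 (fun t => t * (w 0 0 ^+ 2 + w 1 0 ^+ 2)) hu.
  simpl in *; rewrite !expr2 in f2 *; lra.
by rewrite e1 exprMn e2 mul1r.
Qed.

Lemma parallel_cross_orthonormal (u w z : V2) : vdot u u = 1 -> orthonormal2 w z ->
  cross u w = 0 -> cross u z ^+ 2 = 1.
Proof.
move=> hu [hw hz hwz] hD.
have e1 : vdot u z = 0.
  move: hw hwz hD; rewrite !vdotE /cross => hw hwz hD.
  have f1 := congr1 (fun t => t * (w 0 0 * z 1 0 - w 1 0 * z 0 0)) hD.
  have f2 := congr1 (fun t => t * (u 0 0 * z 0 0 + u 1 0 * z 1 0)) hw.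
  have f3 := congr1 (fun t => t * (w 0 0 * u 0 0 + w 1 0 * u 1 0)) hwz.
  simpl in *; lra.
move: hu hz e1; rewrite !vdotE /cross => hu hz e1.
have f1 := congr1 (fun t => t * t) e1.
have f2 := congr1 (fun t => t * (z 0 0 * z 0 0 + z 1 0 * z 1 0)) hu.
simpl in *; rewrite !expr2; lra.
Qed.

Lemma linear_coef_eq0 (B c : R) : (forall t, 2 * t * B + t ^+ 2 * c <= 0) -> B = 0.
Proof.
move=> h; set d := `|c| + 1.
have d0 : 0 < d by rewrite ltr_pwDr // normr_ge0.
have : B ^+ 2 / d ^+ 2 * (2 * d + c) <= 0.
  by have := h (B / d); congr (_ <= _); field; rewrite gt_eqF.
rewrite pmulr_lle0; last by have := ler_norm (- c); have := normr_ge0 c; rewrite normrN /d; lra.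
rewrite pmulr_lle0 ?invr_gt0 ?exprn_gt0 // => B2.
by apply/eqP; rewrite -sqrf_eq0 eq_le B2 sqr_ge0.
Qed.

(* If [u] attains the maximum [L] of the Rayleigh quotient of [A], then [u] is
   [A]-orthogonal to [v]: otherwise moving from [u] towards [v] increases it. *)
Lemma bform_eq0_of_max (A : 'M[R]_2) (L : R) (u v : V2) : A^T = A -> orthonormal2 u v ->
  (forall x, qform A x <= L * vdot x x) -> L <= qform A u -> bform A u v = 0.
Proof.
move=> AT uv hmax hu; have [h1 h2 h12] := uv.
apply: (@linear_coef_eq0 _ (qform A v - L)) => t.
have hq : qform A (u + t *: v) = qform A u + 2 * t * bform A u v + t ^+ 2 * qform A v.
  rewrite /qform bformDl !bformDr !bformZl !bformZr (bformC _ _ AT); ring.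
have hn : vdot (u + t *: v) (u + t *: v) = 1 + t ^+ 2.
  move: h1 h2 h12; rewrite !vdotE !mxE => h1 h2 h12.
  have f1 := congr1 (fun y => t * y) h12; have f2 := congr1 (fun y => t ^+ 2 * y) h2.
  simpl in *; rewrite !expr2 in f2 *; lra.
by have := hmax (u + t *: v); rewrite hq hn; lra.
Qed.

End Frames.

Lemma sum_prod_eq2 (R : idomainType) (l m l' m' : R) :
  l + m = l' + m' -> l * m = l' * m' -> (l = l' /\ m = m') \/ (l = m' /\ m = l').
Proof.
move=> hs hp.
have : (l - l') * (l - m') = 0.
  have -> : (l - l') * (l - m') = l ^+ 2 - l * (l' + m') + l' * m' by ring.
  by rewrite -hs -hp; ring.
move/eqP; rewrite mulf_eq0 !subr_eq0 => /orP[/eqP e|/eqP e].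
  by left; split => //; move: hs; rewrite e => /addrI.
by right; split => //; move: hs; rewrite e addrC => /addIr.
Qed.

Section Spectral.
Variable R : realType.
Local Notation M2 := 'M[R]_2.
Local Notation V2 := 'cV[R]_2.
Implicit Types (A Y : M2) (u v w x : V2) (l m : R).

Lemma sym2P A : sym2 A <-> A 0 1 = A 1 0.
Proof.
split => [h|h]; first by rewrite -{1}h mxE.
by apply: matrix2P; rewrite !mxE.
Qed.

Lemma is_specP Y l m u v : is_spec Y (l, m, u, v) <->
  orthonormal2 u v /\ Y = l *: (u *m u^T) + m *: (v *m v^T).
Proof. by split => [[h1 [h2 [h3 ->]]]|[[h1 h2 h3] ->]]. Qed.

Lemma spec_orthonormal Y l m u v : is_spec Y (l, m, u, v) -> orthonormal2 u v.
Proof. by case/is_specP. Qed.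

Lemma spec_swap Y l m u v : is_spec Y (l, m, u, v) -> is_spec Y (m, l, v, u).
Proof. by case/is_specP => /orthonormalC uv ->; apply/is_specP; rewrite addrC. Qed.

Lemma spec_scale Y k l m u v : is_spec Y (l, m, u, v) ->
  is_spec (k *: Y) (k * l, k * m, u, v).
Proof. by case/is_specP => uv ->; apply/is_specP; rewrite scalerDr !scalerA. Qed.

Lemma spec_entry Y l m u v i j : is_spec Y (l, m, u, v) ->
  Y i j = l * (u i 0 * u j 0) + m * (v i 0 * v j 0).
Proof. by case/is_specP => _ ->; rewrite !mxE !big_ord1 !mxE. Qed.

Lemma spec_qform Y l m u v x : is_spec Y (l, m, u, v) ->
  qform Y x = l * vdot u x ^+ 2 + m * vdot v x ^+ 2.
Proof. by case/is_specP => _ ->; rewrite qformD !qformZ !qform_rank1. Qed.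

Lemma spec_qform_frame Y l m u v : is_spec Y (l, m, u, v) ->
  qform Y u = l /\ qform Y v = m.
Proof.
move=> hs; have [h1 h2 h12] := spec_orthonormal hs.
by rewrite !(spec_qform _ hs) h1 h2 vdotC h12; split; ring.
Qed.

Lemma spec_sym2 Y l m u v : is_spec Y (l, m, u, v) -> sym2 Y.
Proof. by move=> hs; apply/sym2P; rewrite !(spec_entry _ _ hs); ring. Qed.

Lemma spec_psd Y l m u v : is_spec Y (l, m, u, v) -> 0 <= l -> 0 <= m -> psd Y.
Proof.
move=> hs l0 m0; split; first exact: spec_sym2 hs.
by move=> x; change (0 <= qform Y x); rewrite (spec_qform _ hs) addr_ge0 // mulr_ge0 // sqr_ge0.
Qed.

Lemma spec_trace_det Y l m u v : is_spec Y (l, m, u, v) ->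
  Y 0 0 + Y 1 1 = l + m /\ Y 0 0 * Y 1 1 - Y 0 1 * Y 1 0 = l * m.
Proof.
move=> hs; have uv := spec_orthonormal hs.
have [g1 g2 _] := uv; have [f1 f2 _ f4] := orthonormal_coords uv.
rewrite !(spec_entry _ _ hs); move: f4 g1 g2; rewrite /cross !vdotE => f4 g1 g2.
split.
  have e1 := congr1 (fun y => l * y) g1.
  have e2 := congr1 (fun y => m * y) g2.
  simpl in *; lra.
have e := congr1 (fun y => l * m * y) f4.
simpl in *; rewrite !expr2 in f1 f2 e *; lra.
Qed.

Lemma spec_root Y l m u v t : is_spec Y (l, m, u, v) ->
  root (char_poly Y) t = (t == l) || (t == m).
Proof.
move=> hs; have [tr dt] := spec_trace_det hs.
rewrite /root char_poly2E.
have -> : (t - Y 0 0) * (t - Y 1 1) - Y 0 1 * Y 1 0 = (t - l) * (t - m).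
  have -> : (t - Y 0 0) * (t - Y 1 1) - Y 0 1 * Y 1 0 =
     t ^+ 2 - (Y 0 0 + Y 1 1) * t + (Y 0 0 * Y 1 1 - Y 0 1 * Y 1 0) by ring.
  by rewrite tr dt; ring.
by rewrite mulf_eq0 !subr_eq0.
Qed.

Lemma spec_eigen_eq Y l m l' m' u v u' v' :
  is_spec Y (l, m, u, v) -> is_spec Y (l', m', u', v') ->
  (l = l' /\ m = m') \/ (l = m' /\ m = l').
Proof.
move=> hs hs'; have [t d] := spec_trace_det hs; have [t' d'] := spec_trace_det hs'.
by apply: sum_prod_eq2; [rewrite -t -t'|rewrite -d -d'].
Qed.

(* The spectral projection onto u is a polynomial in Y, hence independent of the frame. *)
Lemma spec_proj Y l m u v : is_spec Y (l, m, u, v) ->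
  Y - m%:M = (l - m) *: (u *m u^T).
Proof.
case/is_specP => uv ->; rewrite -scalemx1 -(orthonormal_resolution uv).
by rewrite scalerDr opprD addrACA subrr addr0 scalerBl.
Qed.

Lemma spec_comb_unique (f : R -> R) Y l m u v u' v' :
  is_spec Y (l, m, u, v) -> is_spec Y (l, m, u', v') ->
  f l *: (u *m u^T) + f m *: (v *m v^T) = f l *: (u' *m u'^T) + f m *: (v' *m v'^T).
Proof.
move=> hs hs'; have uv := spec_orthonormal hs; have uv' := spec_orthonormal hs'.
have [<-|lm] := eqVneq m l.
  by rewrite -!scalerDr !orthonormal_resolution.
have Pu : u *m u^T = u' *m u'^T.
  apply: (@scalerI _ _ (l - m)); first by rewrite subr_eq0 eq_sym.
  by rewrite -(spec_proj hs) -(spec_proj hs').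
have Pv : v *m v^T = v' *m v'^T.
  by apply: (addrI (u *m u^T)); rewrite orthonormal_resolution // Pu orthonormal_resolution.
by rewrite Pu Pv.
Qed.

Lemma funcalc_spec (f : R -> R) Y l m u v : is_spec Y (l, m, u, v) ->
  funcalc f Y = f l *: (u *m u^T) + f m *: (v *m v^T).
Proof.
move=> hs; rewrite /funcalc; case: pselect => [h|[]]; last by exists (l, m, u, v).
case: (cid h) => -[[[l' m'] u'] v'] hs' /=.
case: (spec_eigen_eq hs hs') => -[el em]; subst l m.
  exact: spec_comb_unique hs' hs.
by rewrite addrC; apply: spec_comb_unique (spec_swap hs') hs.
Qed.

Lemma spec_funcalc (f : R -> R) Y l m u v : is_spec Y (l, m, u, v) ->
  is_spec (funcalc f Y) (f l, f m, u, v).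
Proof.
move=> hs; apply/is_specP; split; [exact: spec_orthonormal hs|exact: funcalc_spec].
Qed.

Definition vec2 (x y : R) : V2 := \col_i (if i == 0 then x else y).
Definition perp u : V2 := vec2 (- u 1 0) (u 0 0).

Lemma vec2E (x y : R) : vec2 x y 0 0 = x /\ vec2 x y 1 0 = y.
Proof. by rewrite !mxE. Qed.

Lemma perpZ k u : perp (k *: u) = k *: perp u.
Proof. by apply/matrixP => i j; rewrite !mxE; case: ifP; rewrite ?mulrN. Qed.

Lemma orthonormal_perp u : vdot u u = 1 -> orthonormal2 u (perp u).
Proof.
have [p0 p1] := vec2E (- u 1 0) (u 0 0).
by rewrite /orthonormal2 !vdotE p0 p1 => hu; split => //; [rewrite -hu|]; ring.
Qed.

(* Conjugating by the resolution [1 = u u^T + v v^T] splits [A] into four rank-one blocks. *)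
Lemma sym2_spec_of_bform0 A u v : A^T = A -> orthonormal2 u v -> bform A u v = 0 ->
  is_spec A (qform A u, qform A v, u, v).
Proof.
move=> AT uv Buv; apply/is_specP; split => //.
have Bvu : bform A v u = 0 by rewrite bformC.
rewrite {1}(_ : A = (u *m u^T + v *m v^T) *m A *m (u *m u^T + v *m v^T)); last first.
  by rewrite orthonormal_resolution // mul1mx mulmx1.
by rewrite !mulmxDl !mulmxDr !mulmx_rank1 Buv Bvu !scale0r addr0 add0r.
Qed.

(* [bform A w (perp w) = 0] says that [A w] is parallel to [w]; off the diagonal case
   take [w = (b, l - a)] with [l] the larger root of the characteristic polynomial. *)
Lemma sym2_eigenvector_exists A : sym2 A -> exists2 w : V2, 0 < vdot w w & bform A w (perp w) = 0.
Proof.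
move/sym2P => hsym.
have [b0|bn0] := eqVneq (A 0 1) 0.
  have [w0 w1] := vec2E 1 0.
  exists (vec2 1 0); first by rewrite vdotE w0 w1 mul1r mul0r addr0.
  have [p0 p1] := vec2E (- vec2 1 0 1 0) (vec2 1 0 0 0).
  by rewrite bformE /perp p0 p1 w0 w1 -hsym b0; ring.
set a := A 0 0 in hsym *; set b := A 0 1 in hsym bn0 *; set c := A 1 1.
set r := Num.sqrt ((a - c) ^+ 2 + 4 * b ^+ 2).
have hr : r ^+ 2 = (a - c) ^+ 2 + 4 * b ^+ 2.
  by rewrite sqr_sqrtr //; have := sqr_ge0 (a - c); have := sqr_ge0 b; lra.
set l := (a + c + r) / 2.
have hkey : (l - a) * (l - c) = b ^+ 2 by rewrite /l; lra.
have [w0 w1] := vec2E b (l - a).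
have [p0 p1] := vec2E (- vec2 b (l - a) 1 0) (vec2 b (l - a) 0 0).
exists (vec2 b (l - a)).
  rewrite vdotE w0 w1 -!expr2.
  have : 0 < b ^+ 2 by rewrite exprn_even_gt0.
  by have := sqr_ge0 (l - a); lra.
rewrite bformE /perp p0 p1 w0 w1 -hsym -/a -/b -/c.
transitivity (b * (b ^+ 2 - (l - a) * (l - c))); first by ring.
by rewrite hkey subrr mulr0.
Qed.

Lemma sym2_spec_exists A : sym2 A -> exists d, is_spec A d.
Proof.
move=> symA; have [w w_gt0 hw] := sym2_eigenvector_exists symA.
set k := (Num.sqrt (vdot w w))^-1; set u := k *: w.
have hu : vdot u u = 1.
  have -> : vdot u u = k ^+ 2 * vdot w w by rewrite !vdotE !mxE; ring.
  by rewrite exprVn sqr_sqrtr ?ltW // mulVf ?gt_eqF.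
exists (qform A u, qform A (perp u), u, perp u).
apply: sym2_spec_of_bform0; [exact: symA|exact: orthonormal_perp|].
by rewrite perpZ bformZl bformZr hw !mulr0.
Qed.

Lemma funcalc_sym2 (f : R -> R) Y : sym2 (funcalc f Y).
Proof.
rewrite /funcalc; case: pselect => [h|_]; last by rewrite /sym2 trmx0.
case: (cid h) => -[[[l m] u] v] /spec_orthonormal uv /=.
apply: (@spec_sym2 _ (f l) (f m) u v); exact/is_specP.
Qed.

Lemma spec_qform_expm X al be w z (k : R) e : is_spec X (al, be, w, z) ->
  qform (expm (k *: X)) e = expR (k * al) * vdot w e ^+ 2 + expR (k * be) * vdot z e ^+ 2.
Proof. by move=> hs; apply: spec_qform; apply/spec_funcalc/spec_scale. Qed.

Lemma loewner_le_qform A B : sym2 A -> sym2 B ->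
  (forall x, qform A x <= qform B x) -> loewner_le A B.
Proof.
move=> /sym2P symA /sym2P symB hAB; split; first by apply/sym2P; rewrite !mxE symA symB.
by move=> x; change (0 <= qform (B - A) x); rewrite qformB subr_ge0.
Qed.

(* Monotonicity of [f] suffices: if an eigenvector of [X] is parallel to [u], the
   other one is parallel to [v]; otherwise both eigenvalues of [X] are at most [k]. *)
Lemma funcalc_qform_le (f : R -> R) X Y al be w z L k u v x :
  (forall s t, 0 <= s -> s <= t -> f s <= f t) ->
  is_spec X (al, be, w, z) -> is_spec Y (L, k, u, v) ->
  0 <= al <= L -> 0 <= be <= L -> 0 <= k <= L ->
  (cross u w != 0 -> al <= k) -> (cross u z != 0 -> be <= k) ->
  qform (funcalc f X) x <= qform (funcalc f Y) x.
Proof.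
move=> fmono hX hY /andP[al0 alL] /andP[be0 beL] /andP[k0 kL] hw hz.
rewrite (spec_qform _ (spec_funcalc f hX)) (spec_qform _ (spec_funcalc f hY)).
have wz := spec_orthonormal hX; have uv := spec_orthonormal hY.
have [hu _ _] := uv; have [hw1 _ _] := wz.
have c1 := orthonormal_parseval x uv; have c2 := orthonormal_parseval x wz.
set U := vdot u x ^+ 2 in c1 *; set V := vdot v x ^+ 2 in c1 *.
set W := vdot w x ^+ 2 in c2 *; set Z := vdot z x ^+ 2 in c2 *.
have [U0 V0 W0 Z0] : [/\ 0 <= U, 0 <= V, 0 <= W & 0 <= Z] by split; exact: sqr_ge0.
have fkL : f k <= f L by exact: fmono.
have [Dw|Dw] := eqVneq (cross u w) 0.
  have eW : W = U by apply: parallel_vdot_sq.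
  have Dz : cross u z != 0.
    apply/eqP => Dz; have := parallel_cross_orthonormal hu wz Dw.
    by rewrite Dz expr2 mul0r => /eqP; rewrite eq_sym oner_eq0.
  have t1 : f al * W <= f L * U by rewrite eW ler_wpM2r // fmono.
  have t2 : f be * Z <= f k * V.
    by rewrite (_ : Z = V) ?ler_wpM2r ?fmono ?hz //; lra.
  lra.
have [Dz|Dz] := eqVneq (cross u z) 0.
  have eZ : Z = U by apply: parallel_vdot_sq; have [] := orthonormalC wz.
  have t1 : f be * Z <= f L * U by rewrite eZ ler_wpM2r // fmono.
  have t2 : f al * W <= f k * V.
    by rewrite (_ : W = V) ?ler_wpM2r ?fmono ?hw //; lra.
  lra.
have t1 : f al * W <= f k * W by rewrite ler_wpM2r // fmono // hw.
have t2 : f be * Z <= f k * Z by rewrite ler_wpM2r // fmono // hz.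
have t3 : f k * U <= f L * U by rewrite ler_wpM2r.
have : f k * W + f k * Z = f k * U + f k * V by rewrite -!mulrDr c1 c2.
lra.
Qed.

Lemma sym2_spec_root A t : sym2 A -> root (char_poly A) t ->
  exists m u v, is_spec A (t, m, u, v).
Proof.
move=> symA; have [[[[l m] u] v] hs] := sym2_spec_exists symA.
rewrite (spec_root _ hs) => /orP[]/eqP->; first by exists m, u, v.
by exists l, v, u; apply: spec_swap.
Qed.

Lemma is_eig_mem (Xs : seq M2) X t : X \in Xs -> root (char_poly X) t -> is_eig Xs t.
Proof.
move=> hX hr; rewrite /is_eig /eigmult (big_rem X) //=.
have hnz : char_poly X != 0 := monic_neq0 (char_poly_monic X).
by apply: leq_trans (leq_addr _ _); rewrite -XsubC_dvd // dvdp_XsubCl.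
Qed.

Lemma is_eigP (Xs : seq M2) t : is_eig Xs t -> exists2 X, X \in Xs & root (char_poly X) t.
Proof.
elim: Xs => [|X s IH]; rewrite /is_eig /eigmult ?big_nil ?big_cons //.
have [e|p] := posnP (mup t (char_poly X)).
  rewrite e add0n => h; have [Y hY hr] := IH h.
  by exists Y => //; rewrite inE hY orbT.
exists X; first by rewrite inE eqxx.
have hnz : char_poly X != 0 := monic_neq0 (char_poly_monic X).
by rewrite -dvdp_XsubCl XsubC_dvd.
Qed.

End Spectral.

Section Limits.
Variable R : realType.

Lemma cvg_add_Oinv (c K : R) : (fun m : nat => c + K / m.+1%:R) @ \oo --> c.
Proof.
rewrite -[c in _ --> c]addr0; apply: cvgD; first exact: cvg_cst.
rewrite -(mulr0 K); apply: cvgM; [exact: cvg_cst|exact: cvg_harmonic].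
Qed.

Lemma cvg_ge_of_lb (f : nat -> R) l c K : f @ \oo --> l ->
  (forall m, (0 < m)%N -> c + K / m%:R <= f m) -> c <= l.
Proof.
move=> fl hb; rewrite -cvg_shiftS in fl.
apply: (ler_cvg_to (@cvg_add_Oinv c K) fl); apply: nearW => m; exact: hb.
Qed.

Lemma cvg_le_of_ub (f : nat -> R) l c K : f @ \oo --> l ->
  (forall m, (0 < m)%N -> f m <= c + K / m%:R) -> l <= c.
Proof.
move=> fl hb; rewrite -cvg_shiftS in fl.
apply: (ler_cvg_to fl (@cvg_add_Oinv c K)); apply: nearW => m; exact: hb.
Qed.
End Limits.

Section Logarithm.
Variable R : realType.

Lemma sub1_le_mul_ln (c : R) : 0 < c -> c - 1 <= c * ln c.
Proof.
move=> c0.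
have h : -1 < c^-1 - 1 by rewrite ltrBrDl subrr invr_gt0.
have := le_ln1Dx h; rewrite addrC subrK lnV ?posrE // => h2.
have : c * (- ln c) <= c * (c^-1 - 1) by rewrite ler_pM2l.
by rewrite mulrBr mulfV ?gt_eqF //; lra.
Qed.

Lemma ln_mul_expR (K t : R) : 0 < K -> ln (K * expR t) = ln K + t.
Proof. by move=> K0; rewrite lnM ?posrE ?expR_gt0 // expRK. Qed.

Lemma ler_mul_ln (c t mu : R) : 0 <= c -> 0 < mu -> c * expR t <= mu ->
  c * t - 1 <= c * ln mu.
Proof.
move=> c0 mu0 hmu; have [->|cn0] := eqVneq c 0; first by rewrite !mul0r; lra.
have cp : 0 < c by rewrite lt_neqAle eq_sym cn0.
have : ln (c * expR t) <= ln mu by rewrite ler_ln ?posrE ?mulr_gt0 ?expR_gt0.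
rewrite ln_mul_expR // => hl.
have := sub1_le_mul_ln cp.
have : c * (ln c + t) <= c * ln mu by rewrite ler_pM2l.
lra.
Qed.

End Logarithm.

Section SupLE.
Variable R : realType.
Local Notation M2 := 'M[R]_2.
Local Notation V2 := 'cV[R]_2.
Variables (Xs : seq M2) (S : M2).
Hypothesis supLE_S : is_supLE Xs S.

Definition expsum (m : nat) : M2 := \sum_(X <- Xs) expm (m%:R *: X).

Lemma expsum_sym2 m : sym2 (expsum m).
Proof. by apply/sym2P; rewrite !summxE; apply: eq_bigr => X _; apply/sym2P/funcalc_sym2. Qed.

Lemma supLE_sym2 : sym2 S.
Proof.
apply/sym2P.
rewrite -(cvg_lim (@Rhausdorff R) (@supLE_S 0 1)) -(cvg_lim (@Rhausdorff R) (@supLE_S 1 0)).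
suff -> : (fun m => supLE_seq Xs m 0 1) = (fun m => supLE_seq Xs m 1 0) by [].
by apply/funext => m; rewrite !mxE; congr (_ * _); exact/sym2P/funcalc_sym2.
Qed.

Lemma cvg_qform_supLE x : (fun m => qform (supLE_seq Xs m) x) @ \oo --> qform S x.
Proof.
rewrite /qform bformE; under eq_fun do rewrite bformE.
by apply: cvgD; apply: cvgM; try exact: cvg_cst;
   apply: cvgD; apply: cvgM; try exact: cvg_cst; exact: supLE_S.
Qed.

Lemma supLE_seq_spec m : exists l1 l2 (e1 e2 : V2),
  [/\ orthonormal2 e1 e2, qform (expsum m) e1 = l1, qform (expsum m) e2 = l2 &
      forall x, qform (supLE_seq Xs m) x =
        m%:R^-1 * (ln l1 * vdot e1 x ^+ 2 + ln l2 * vdot e2 x ^+ 2)].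
Proof.
have [[[[l1 l2] e1] e2] hs] := sym2_spec_exists (expsum_sym2 m).
have [q1 q2] := spec_qform_frame hs.
exists l1, l2, e1, e2; split => //; first exact: spec_orthonormal hs.
by move=> x; rewrite /supLE_seq qformZ (spec_qform _ (spec_funcalc _ hs)).
Qed.

Lemma supLE_seq_qform_ge m b x : (0 < m)%N ->
  (forall e, vdot e e = 1 -> b <= ln (qform (expsum m) e)) ->
  b / m%:R * vdot x x <= qform (supLE_seq Xs m) x.
Proof.
move=> m0 hb; have [l1 [l2 [e1 [e2 [ee <- <- ->]]]]] := supLE_seq_spec m.
have [h1 h2 _] := ee.
rewrite -(orthonormal_parseval x ee) mulrAC [X in X <= _]mulrC.
rewrite ler_pM2l ?invr_gt0 ?ltr0n // mulrDr.
by apply: lerD; apply: ler_wpM2r; rewrite ?sqr_ge0 ?vdotC //; apply: hb.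
Qed.

Lemma supLE_seq_qform_le m b x : (0 < m)%N ->
  (forall e, vdot e e = 1 -> ln (qform (expsum m) e) <= b) ->
  qform (supLE_seq Xs m) x <= b / m%:R * vdot x x.
Proof.
move=> m0 hb; have [l1 [l2 [e1 [e2 [ee <- <- ->]]]]] := supLE_seq_spec m.
have [h1 h2 _] := ee.
rewrite -(orthonormal_parseval x ee) mulrAC [X in _ <= X]mulrC.
rewrite ler_pM2l ?invr_gt0 ?ltr0n // mulrDr.
by apply: lerD; apply: ler_wpM2r; rewrite ?sqr_ge0 ?vdotC //; apply: hb.
Qed.

Lemma supLE_qform_ge (K c : R) x : 0 < K ->
  (forall m, (0 < m)%N -> forall e, vdot e e = 1 ->
     K * expR (m%:R * c) <= qform (expsum m) e) ->
  c * vdot x x <= qform S x.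
Proof.
move=> K0 hb; apply: (cvg_ge_of_lb (K := ln K * vdot x x) (@cvg_qform_supLE x)) => m m0.
have mR : 0 < m%:R :> R by rewrite ltr0n.
have -> : c * vdot x x + ln K * vdot x x / m%:R = (ln K + m%:R * c) / m%:R * vdot x x.
  by field; rewrite gt_eqF.
apply: supLE_seq_qform_ge => // e he; rewrite -ln_mul_expR // ler_ln ?posrE ?hb //.
  by rewrite mulr_gt0 ?expR_gt0.
by apply: lt_le_trans (hb m m0 e he); rewrite mulr_gt0 ?expR_gt0.
Qed.

Lemma supLE_qform_le (K c : R) x : 0 < K ->
  (forall m, (0 < m)%N -> forall e, vdot e e = 1 ->
     0 < qform (expsum m) e <= K * expR (m%:R * c)) ->
  qform S x <= c * vdot x x.
Proof.
move=> K0 hb; apply: (cvg_le_of_ub (K := ln K * vdot x x) (@cvg_qform_supLE x)) => m m0.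
have mR : 0 < m%:R :> R by rewrite ltr0n.
have -> : c * vdot x x + ln K * vdot x x / m%:R = (ln K + m%:R * c) / m%:R * vdot x x.
  by field; rewrite gt_eqF.
apply: supLE_seq_qform_le => // e he; have /andP[q0 qK] := hb m m0 e he.
by rewrite -ln_mul_expR // ler_ln ?posrE ?mulr_gt0 ?expR_gt0.
Qed.

(* Only the direction [u] is controlled, so the weights [vdot e u ^+ 2] may vanish;
   [ler_mul_ln] bounds their entropy-like error by [-1] each. *)
Lemma supLE_qform_dir_ge (L : R) u : vdot u u = 1 ->
  (forall m, (0 < m)%N -> forall e, vdot e e = 1 -> 0 < qform (expsum m) e) ->
  (forall m, (0 < m)%N -> forall e, expR (m%:R * L) * vdot u e ^+ 2 <= qform (expsum m) e) ->
  L <= qform S u.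
Proof.
move=> hu hpos hb; apply: (cvg_ge_of_lb (K := -2) (@cvg_qform_supLE u)) => m m0.
have [l1 [l2 [e1 [e2 [ee hl1 hl2 ->]]]]] := supLE_seq_spec m.
have [h1 h2 _] := ee.
have hc := orthonormal_parseval u ee; rewrite hu in hc.
have mR : 0 < m%:R :> R by rewrite ltr0n.
have lb (e : V2) l : vdot e e = 1 -> qform (expsum m) e = l ->
    vdot e u ^+ 2 * (m%:R * L) - 1 <= ln l * vdot e u ^+ 2.
  move=> he <-; rewrite [X in _ <= X]mulrC; apply: ler_mul_ln; rewrite ?sqr_ge0 ?hpos //.
  by rewrite mulrC vdotC; apply: hb.
have t1 := lb _ _ h1 hl1; have t2 := lb _ _ h2 hl2.
rewrite (_ : L + -2 / m%:R = m%:R^-1 *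
    ((vdot e1 u ^+ 2 * (m%:R * L) - 1) + (vdot e2 u ^+ 2 * (m%:R * L) - 1))); last first.
  have -> : forall c1 c2 t : R, c1 * t - 1 + (c2 * t - 1) = (c1 + c2) * t - 2 by move=> *; ring.
  by rewrite hc; field; rewrite gt_eqF.
by rewrite ler_pM2l ?invr_gt0 // lerD.
Qed.

Lemma supLE_qform_ge_pair (L al : R) (u w : V2) x : vdot u u = 1 -> vdot w w = 1 ->
  cross u w != 0 -> al <= L ->
  (forall m, (0 < m)%N -> forall e,
     expR (m%:R * L) * vdot u e ^+ 2 + expR (m%:R * al) * vdot w e ^+ 2 <= qform (expsum m) e) ->
  al * vdot x x <= qform S x.
Proof.
move=> hu hw Dw alL hb.
have K0 : 0 < cross u w ^+ 2 / 2 by rewrite divr_gt0 // exprn_even_gt0.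
apply: (supLE_qform_ge x K0) => m m0 e he; apply: le_trans (hb m m0 e).
have := sq_cross_le e hu hw; rewrite he mulr1 => hD.
have hE : expR (m%:R * al) <= expR (m%:R * L) by rewrite ler_expR ler_wpM2l.
have t1 : expR (m%:R * al) * vdot u e ^+ 2 <= expR (m%:R * L) * vdot u e ^+ 2.
  by rewrite ler_wpM2r ?sqr_ge0.
have t2 : expR (m%:R * al) * (cross u w ^+ 2 / 2) <=
          expR (m%:R * al) * (vdot u e ^+ 2 + vdot w e ^+ 2).
  by rewrite ler_pM2l ?expR_gt0 //; lra.
by rewrite mulrC; lra.
Qed.

End SupLE.

Section TopEigenvector.
Variable R : realType.
Local Notation M2 := 'M[R]_2.
Local Notation V2 := 'cV[R]_2.
Variables (Xs : seq M2) (S X1 : M2) (L a : R) (u v : V2).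
Hypotheses (symXs : forall X, X \in Xs -> sym2 X)
  (eig_range : forall X t, X \in Xs -> root (char_poly X) t -> 0 <= t <= L)
  (X1_in : X1 \in Xs) (specX1 : is_spec X1 (L, a, u, v)) (supLE_S : is_supLE Xs S).

Let uv : orthonormal2 u v := spec_orthonormal specX1.

Lemma spec_eig_range X al be w z : X \in Xs -> is_spec X (al, be, w, z) ->
  0 <= al <= L /\ 0 <= be <= L.
Proof.
move=> hX hs; split; apply: (eig_range hX); rewrite (spec_root _ hs) eqxx ?orbT //.
Qed.

Lemma expsum_qform_ge_term X m e : X \in Xs ->
  qform (expm (m%:R *: X)) e <= qform (expsum Xs m) e.
Proof.
move=> hX; rewrite /expsum qform_sum (big_rem X) //= lerDl big_seq sumr_ge0 // => Y.
move=> /mem_rem /symXs /sym2_spec_exists [[[[al be] w z] hs]].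
by rewrite (spec_qform_expm _ _ hs) addr_ge0 // mulr_ge0 ?expR_ge0 ?sqr_ge0.
Qed.

Lemma expsum_qform_ge_terms X Y m e : X \in Xs -> Y \in Xs -> Y != X ->
  qform (expm (m%:R *: X)) e + qform (expm (m%:R *: Y)) e <= qform (expsum Xs m) e.
Proof.
move=> hX hY YX; rewrite /expsum qform_sum (big_rem X) //= lerD2l.
have hY' : Y \in rem X Xs by apply: rem_mem.
rewrite (big_rem Y) //= lerDl big_seq sumr_ge0 // => Z.
move=> /mem_rem /mem_rem /symXs /sym2_spec_exists [[[[al be] w z] hs]].
by rewrite (spec_qform_expm _ _ hs) addr_ge0 // mulr_ge0 ?expR_ge0 ?sqr_ge0.
Qed.

Lemma expsum_qform_ge_top m e :
  expR (m%:R * L) * vdot u e ^+ 2 + expR (m%:R * a) * vdot v e ^+ 2 <= qform (expsum Xs m) e.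
Proof. by rewrite -(spec_qform_expm _ _ specX1); exact: expsum_qform_ge_term. Qed.

Lemma expsum_qform_gt0 m e : vdot e e = 1 -> 0 < qform (expsum Xs m) e.
Proof.
move=> he; apply: lt_le_trans (expsum_qform_ge_top m e).
have [/andP[L0 _] /andP[a0 _]] := spec_eig_range X1_in specX1.
have := orthonormal_parseval e uv; rewrite he => c.
have t1 : vdot u e ^+ 2 <= expR (m%:R * L) * vdot u e ^+ 2.
  by rewrite ler_peMl ?sqr_ge0 // -expR0 ler_expR mulr_ge0.
have t2 : vdot v e ^+ 2 <= expR (m%:R * a) * vdot v e ^+ 2.
  by rewrite ler_peMl ?sqr_ge0 // -expR0 ler_expR mulr_ge0.
lra.
Qed.

Lemma supLE_qform_le_top x : qform S x <= L * vdot x x.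
Proof.
have size_gt0 : 0 < (size Xs)%:R :> R by rewrite ltr0n; case: (Xs) X1_in.
apply: (supLE_qform_le supLE_S x size_gt0) => m _ e he; rewrite expsum_qform_gt0 //=.
rewrite /expsum qform_sum -sum1_size natr_sum mulr_suml !big_seq; apply: ler_sum => X hX.
have [[[[al be] w z] hs]] := sym2_spec_exists (symXs hX).
have [/andP[_ alL] /andP[_ beL]] := spec_eig_range hX hs.
have := orthonormal_parseval e (spec_orthonormal hs); rewrite he => c.
rewrite (spec_qform_expm _ _ hs) mul1r.
have t1 : expR (m%:R * al) * vdot w e ^+ 2 <= expR (m%:R * L) * vdot w e ^+ 2.
  by rewrite ler_wpM2r ?sqr_ge0 // ler_expR ler_wpM2l.
have t2 : expR (m%:R * be) * vdot z e ^+ 2 <= expR (m%:R * L) * vdot z e ^+ 2.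
  by rewrite ler_wpM2r ?sqr_ge0 // ler_expR ler_wpM2l.
by have := congr1 (fun y => expR (m%:R * L) * y) c; rewrite mulr1 mulrDr /=; lra.
Qed.

Lemma supLE_qform_u_ge : L <= qform S u.
Proof.
have [hu _ _] := uv.
apply: (supLE_qform_dir_ge supLE_S hu) => [m _ e|m _ e]; first exact: expsum_qform_gt0.
apply: le_trans (expsum_qform_ge_top m e).
by rewrite lerDl mulr_ge0 ?expR_ge0 ?sqr_ge0.
Qed.

Lemma supLE_spec : is_spec S (L, qform S v, u, v).
Proof.
have ST := supLE_sym2 supLE_S; have [hu _ _] := uv.
have B0 := bform_eq0_of_max ST uv supLE_qform_le_top supLE_qform_u_ge.
suff <- : qform S u = L by exact: sym2_spec_of_bform0.
apply: le_anti; rewrite supLE_qform_u_ge andbT.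
by have := supLE_qform_le_top u; rewrite hu mulr1.
Qed.

Lemma supLE_qform_v_ge : a <= qform S v.
Proof.
have [hu hv _] := uv; have [_ /andP[_ aL]] := spec_eig_range X1_in specX1.
have Duv : cross u v != 0.
  have [_ _ _ c2] := orthonormal_coords uv.
  by apply/eqP => c0; move: c2; rewrite c0 expr2 mul0r => /eqP; rewrite eq_sym oner_eq0.
have := supLE_qform_ge_pair supLE_S v hu hv Duv aL; rewrite hv mulr1; apply => m _ e.
exact: expsum_qform_ge_top.
Qed.

Lemma supLE_qform_v_ge_eig X al be w z : X \in Xs -> X != X1 -> is_spec X (al, be, w, z) ->
  cross u w != 0 -> al <= qform S v.
Proof.
move=> hX XX1 hs Dw; have [hw _ _] := spec_orthonormal hs; have [hu hv _] := uv.
have [/andP[_ alL] _] := spec_eig_range hX hs.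
have := supLE_qform_ge_pair supLE_S v hu hw Dw alL; rewrite hv mulr1; apply => m _ e.
apply: le_trans (expsum_qform_ge_terms m e X1_in hX XX1).
rewrite (spec_qform_expm _ _ specX1) (spec_qform_expm _ _ hs).
have : 0 <= expR (m%:R * a) * vdot v e ^+ 2 by rewrite mulr_ge0 ?expR_ge0 ?sqr_ge0.
have : 0 <= expR (m%:R * be) * vdot z e ^+ 2 by rewrite mulr_ge0 ?expR_ge0 ?sqr_ge0.
lra.
Qed.

Lemma supLE_psd : psd S.
Proof.
have [/andP[L0 _] /andP[a0 _]] := spec_eig_range X1_in specX1.
exact: spec_psd supLE_spec L0 (le_trans a0 supLE_qform_v_ge).
Qed.

Lemma powm_supLE_ge p X : 0 <= p -> X \in Xs -> loewner_le (powm X p) (powm S p).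
Proof.
move=> p0 hX; apply: loewner_le_qform; [exact: funcalc_sym2|exact: funcalc_sym2|move=> x].
have powR_mono (s t : R) : 0 <= s -> s <= t -> s `^ p <= t `^ p.
  by move=> s0 st; rewrite ge0_ler_powR // nnegrE (le_trans s0).
have [Lrange arange] := spec_eig_range X1_in specX1.
have krange : 0 <= qform S v <= L.
  have [hu hv _] := uv; have /andP[a0 _] := arange.
  rewrite (le_trans a0 supLE_qform_v_ge) /=.
  by have := supLE_qform_le_top v; rewrite hv mulr1.
have [->|XX1] := eqVneq X X1.
  apply: (funcalc_qform_le x powR_mono specX1 supLE_spec) => //.
  - by rewrite /cross mulrC subrr eqxx.
  - by move=> _; exact: supLE_qform_v_ge.
have [[[[al be] w z] hs]] := sym2_spec_exists (symXs hX).
have [alrange berange] := spec_eig_range hX hs.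
apply: (funcalc_qform_le x powR_mono hs supLE_spec) => //.
- exact: supLE_qform_v_ge_eig hs.
- exact: supLE_qform_v_ge_eig (spec_swap hs).
Qed.

End TopEigenvector.

Unset Implicit Arguments.

Theorem lemma8 (R : realType) (Xs : seq 'M[R]_2) (S : 'M[R]_2) :
  (forall X, X \in Xs -> sym2 X) ->
  (forall X, X \in Xs -> forall t : R, root (char_poly X) t -> 0 <= t) ->
  lemma7_hyp Xs ->
  is_supLE Xs S ->
  forall p : R, 0 < p -> upper_cone_p p Xs S.
Proof.
move=> symXs nnegXs [L [_ [multL [Lmax _]]]] supLE_S p p_gt0.
have eig_range X t : X \in Xs -> root (char_poly X) t -> 0 <= t <= L.
  by move=> hX ht; rewrite (nnegXs X hX t ht) Lmax //; exact: is_eig_mem ht.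
have [X1 X1_in /(sym2_spec_root (symXs _ X1_in)) [a [u [v specX1]]]] :
    exists2 X, X \in Xs & root (char_poly X) L by apply: is_eigP; rewrite /is_eig multL.
split; first exact: supLE_psd eig_range X1_in specX1 supLE_S.
split; first exact: funcalc_sym2.
move=> _ /mapP[X hX ->].
by apply: (powm_supLE_ge symXs eig_range X1_in specX1 supLE_S) => //; exact: ltW.
Qed.
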